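(* The action institution enjoys the satisfaction condition. That is, for every action signature morphism $\eta : H \to H'$, every $H'$-action structure $\Omega'$ and every action sentence $g_{\mathrm{pre}} \rightarrow [a]\overline{m} \rhd g_{\mathrm{post}}$ over $H$, $$\Omega'|_\eta \models g_{\mathrm{pre}} \rightarrow [a]\overline{m} \rhd g_{\mathrm{post}} \iff \Omega' \models \eta(g_{\mathrm{pre}} \rightarrow [a]\overline{m} \rhd g_{\mathrm{post}}).$$
   Context: Guards. Fix a set $\mathrm{Val}$ of values and an institution of guards: its signatures are sets $V$ (of variables) and its signature morphisms are functions $v : V \to V'$; the models of $V$ are the valuations $\omega : V \to \mathrm{Val}$, and the reduct of $\omega' : V' \to \mathrm{Val}$ along $v$ is $\omega' \circ v$. For each $V$ there is a set $G(V)$ of guards, for each $v$ a translation map $G(v) : G(V) \to G(V')$, and a satisfaction relation $\omega \models g$ between valuations and guards, such that $\omega' \models G(v)(g)$ iff $\omega' \circ v \models g$. Actions. An action signature is a triple $H = (A_H, M_H, V_H)$ of sets (actions, messages, variables); a morphism $\eta : H \to H'$ is a triple of functions $\eta = (\eta_A : A_H \to A_{H'}, \eta_M : M_H \to M_{H'}, \eta_V : V_H \to V_{H'})$. An $H$-action structure is a relation $\Omega \subseteq (V_H \to \mathrm{Val}) \times (A_H \times \wp(M_H)) \times (V_H \to \mathrm{Val})$; we write $\omega \xrightarrow{a,\overline{m}}_\Omega \omega'$ for $(\omega,a,\overline{m},\omega') \in \Omega$. The reduct of an $H'$-action structure $\Omega'$ along $\eta$ is $\Omega'|_\eta = \{ (\omega_1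 \circ \eta_V, a, \eta_M^{-1}(\overline{m}), \omega_2 \circ \eta_V) \mid (\omega_1, \eta_A(a), \overline{m}, \omega_2) \in \Omega' \}$. The $H$-sentences are expressions $g_{\mathrm{pre}} \rightarrow [a]\overline{m} \rhd g_{\mathrm{post}}$ with $g_{\mathrm{pre}}, g_{\mathrm{post}} \in G(V_H)$, $a \in A_H$, $\overline{m} \subseteq M_H$; their translation along $\eta$ is $G(\eta_V)(g_{\mathrm{pre}}) \rightarrow [\eta_A(a)]\eta_M(\overline{m}) \rhd G(\eta_V)(g_{\mathrm{post}})$ (where $\eta_M(\overline{m})$ is the image). Satisfaction: $\Omega \models g_{\mathrm{pre}} \rightarrow [a]\overline{m} \rhd g_{\mathrm{post}}$ iff for all $\omega, \omega' : V_H \to \mathrm{Val}$ and all $\overline{m}' \subseteq M_H$, if $\omega \models g_{\mathrm{pre}}$ and $\omega \xrightarrow{a,\overline{m}'}_\Omega \omega'$, then $\omega' \models g_{\mathrm{post}}$ and $\overline{m} \subseteq \overline{m}'$. *)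

Set Implicit Arguments.

(* An institution of guards over a fixed set of values Val.
   Signatures are sets (Types) V, signature morphisms are functions,
   models of V are valuations V -> Val, reducts are precomposition. *)
Record GuardInst (Val : Type) := {
  G : Type -> Type;
  Gmap : forall V V' : Type, (V -> V') -> G V -> G V';
  gsat : forall V : Type, (V -> Val) -> G V -> Prop;
  gsat_cond : forall (V V' : Type) (v : V -> V') (w' : V' -> Val) (g : G V),
      gsat w' (Gmap v g) <-> gsat (fun x => w' (v x)) g
}.

Record ActSig := { A_ : Type; M_ : Type; V_ : Type }.

Record ActMor (H H' : ActSig) := {
  etaA : A_ H -> A_ H';
  etaM : M_ H -> M_ H';
  etaV : V_ H -> V_ H'
}.

Definition subset_of (M : Type) := M -> Prop.

Definition ActStruct (Val : Type) (H : ActSig) : Type :=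
  (V_ H -> Val) -> A_ H -> subset_of (M_ H) -> (V_ H -> Val) -> Prop.

Definition reduct (Val : Type) (H H' : ActSig) (eta : ActMor H H')
  (Om' : ActStruct Val H') : ActStruct Val H :=
  fun w a ms w' =>
    exists (w1 w2 : V_ H' -> Val) (ms' : subset_of (M_ H')),
      Om' w1 (etaA eta a) ms' w2 /\
      w = (fun x => w1 (etaV eta x)) /\
      ms = (fun m => ms' (etaM eta m)) /\
      w' = (fun x => w2 (etaV eta x)).

Record ActSen (Val : Type) (GI : GuardInst Val) (H : ActSig) := {
  s_pre : G GI (V_ H);
  s_act : A_ H;
  s_msg : subset_of (M_ H);
  s_post : G GI (V_ H)
}.

Definition img (M M' : Type) (f : M -> M') (ms : subset_of M) : subset_of M' :=
  fun m' => exists m, ms m /\ f m = m'.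

Definition sen_tr (Val : Type) (GI : GuardInst Val) (H H' : ActSig)
  (eta : ActMor H H') (s : ActSen GI H) : ActSen GI H' :=
  {| s_pre := Gmap GI (etaV eta) (s_pre s);
     s_act := etaA eta (s_act s);
     s_msg := img (etaM eta) (s_msg s);
     s_post := Gmap GI (etaV eta) (s_post s) |}.

Definition act_sat (Val : Type) (GI : GuardInst Val) (H : ActSig)
  (Om : ActStruct Val H) (s : ActSen GI H) : Prop :=
  forall (w w' : V_ H -> Val) (ms' : subset_of (M_ H)),
    gsat GI w (s_pre s) -> Om w (s_act s) ms' w' ->
    gsat GI w' (s_post s) /\ (forall m, s_msg s m -> ms' m).


(* Every transition of [reduct eta Om'] is the reduct of a transition of [Om'],
   and guard satisfaction commutes with reducts by [gsat_cond]; the message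
   condition transfers because [img f msg] is contained in [ms'] exactly when
   [msg] is contained in the preimage of [ms'] under [f]. *)

Lemma reduct_of_transition {Val : Type} {H H' : ActSig} (eta : ActMor H H')
  {Om' : ActStruct Val H'} {w1 w2 : V_ H' -> Val} {a : A_ H}
  {ms' : subset_of (M_ H')} :
  Om' w1 (etaA eta a) ms' w2 ->
  reduct eta Om' (fun x => w1 (etaV eta x)) a (fun m => ms' (etaM eta m))
    (fun x => w2 (etaV eta x)).
Proof. intros HOm. exists w1, w2, ms'. repeat split; assumption. Qed.

Lemma img_incl_iff {M M' : Type} (f : M -> M') (ms : subset_of M)
  (ms' : subset_of M') :
  (forall m', img f ms m' -> ms' m') <-> (forall m, ms m -> ms' (f m)).
Proof.
  split.
  - intros Himg m Hm. apply Himg. exists m. split; [exact Hm | reflexivity].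
  - intros Hpre m' [m [Hm <-]]. exact (Hpre m Hm).
Qed.

Theorem mainTheorem1 (Val : Type) (GI : GuardInst Val) (H H' : ActSig)
  (eta : ActMor H H') (Om' : ActStruct Val H') (s : ActSen GI H) :
  act_sat (reduct eta Om') s <-> act_sat Om' (sen_tr eta s).
Proof.
  destruct s as [pre a msg post]; unfold act_sat, sen_tr; simpl.
  split.
  - intros Hs w1 w2 ms' Hpre HOm.
    apply (gsat_cond GI (etaV eta) w1 pre) in Hpre.
    destruct (Hs _ _ _ Hpre (reduct_of_transition eta HOm)) as [Hpost Hmsg].
    split.
    + exact (proj2 (gsat_cond GI (etaV eta) w2 post) Hpost).
    + exact (proj2 (img_incl_iff (etaM eta) msg ms') Hmsg).
  - intros Hs w w' ms Hpre [w1 [w2 [ms' [HOm [-> [-> ->]]]]]].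
    apply (gsat_cond GI (etaV eta) w1 pre) in Hpre.
    destruct (Hs w1 w2 ms' Hpre HOm) as [Hpost Hmsg].
    split.
    + exact (proj1 (gsat_cond GI (etaV eta) w2 post) Hpost).
    + exact (proj1 (img_incl_iff (etaM eta) msg ms') Hmsg).
Qed.
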